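(* Let $W\in\mathbb{C}[x_1,\dots,x_n]$ be a nondegenerate quasihomogeneous polynomial, $G$ a finite subgroup of $G_W$, and $g\in G$ with $n_g>0$. Then $W^g$ is a nondegenerate quasihomogeneous polynomial in $R^g$, and the centralizer $C_G(g)$ (acting on $V^g$ by restriction) is a finite subgroup of the symmetry group $G_{W^g}$.
   Context: $W$ is quasihomogeneous: there are positive integers $w_1,\dots,w_n,d$ with $W(\lambda^{w_1}x_1,\dots,\lambda^{w_n}x_n)=\lambda^dW$; the charge of $x_i$ is $q_i=w_i/d$. Nondegenerate means the Jacobi ring $\mathbb{C}[x]/(\partial W/\partial x_1,\dots,\partial W/\partial x_n)$ is finite dimensional. $\mathrm{GL}_n(\mathbb{C})$ acts on $V=\bigoplus\mathbb{C}x_i$ by $g\cdot x_i=\sum_j g_{ij}x_j$ and on polynomials by $(g\cdot f)(x)=f(g\cdot x_1,\dots,g\cdot x_n)$. $G_W=\{g\in\mathrm{GL}_n(\mathbb{C}): g\cdot W=W,\ g_{ij}=0\text{ if }w_i\ne w_j\}$ (the symmetry group; defined likewise for any nondegenerate quasihomogeneous polynomial). For $g\in G$, choose eigenvectors $y_1,\dots,y_n\in V$ of $g$ forming a basis, with eigenvalues $\lambda_1,\dots,\lambda_n$, such that $y_i$ has the same weight/charge as $x_i$ (possible since $g$ is block diagonal by weight). Let $W'$ be the polynomial with $W'(y_1,\dots,y_n)=W(x_1,\dots,x_n)$. Let $V^g=\ker(E_n-g)$, $n_g=\dim V^g$, $I^g=\{i:\lambda_i=1\}=\{i_1,\dots,i_{n_g}\}$,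 $R^g=\mathbb{C}[y_{i_1},\dots,y_{i_{n_g}}]$, and $W^g=W'|_{y_i=0\ (i\notin I^g)}\in R^g$. *)

From HB Require Import structures.
From mathcomp Require Import all_boot all_order all_algebra.
From mathcomp Require Import reals complex.
From mathcomp Require Import mpoly.

Set Implicit Arguments.
Unset Strict Implicit.
Unset Printing Implicit Defensive.

Import Order.TTheory GRing.Theory Num.Theory.
Local Open Scope ring_scope.

Section Defs.
Variable (C : fieldType).

Definition qh_subst (n : nat) (w : 'I_n -> nat) (lam : C) :
  n.-tuple {mpoly C[n]} := [tuple (lam ^+ w i) *: 'X_i | i < n].

Definition quasihomogeneous_wd (n : nat) (W : {mpoly C[n]})
    (w : 'I_n -> nat) (d : nat) : Prop :=
  [/\ forall i, (0 < w i)%N, (0 < d)%N &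
      forall lam : C, W \mPo qh_subst w lam = lam ^+ d *: W].

Definition in_jacobian_ideal (n : nat) (W p : {mpoly C[n]}) : Prop :=
  exists a : 'I_n -> {mpoly C[n]}, p = \sum_(i < n) a i * mderiv i W.

(* Nondegenerate: the Jacobi ring C[x]/(∂W/∂x_i) is finite dimensional,
   i.e. spanned (as a C-vector space) by the classes of finitely many
   polynomials. *)
Definition nondegenerate_W (n : nat) (W : {mpoly C[n]}) : Prop :=
  exists B : seq {mpoly C[n]}, forall p : {mpoly C[n]},
    exists c : 'I_(size B) -> C,
      in_jacobian_ideal W (p - \sum_(k < size B) c k *: B`_k).

Definition lin_subst (n : nat) (g : 'M[C]_n) : n.-tuple {mpoly C[n]} :=
  [tuple \sum_(j < n) g i j *: 'X_j | i < n].

Definition mx_act (n : nat) (g : 'M[C]_n) (f : {mpoly C[n]}) : {mpoly C[n]} :=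
  f \mPo lin_subst g.

Definition in_sym_group (n : nat) (W : {mpoly C[n]}) (w : 'I_n -> nat)
    (g : 'M[C]_n) : Prop :=
  [/\ g \in unitmx, mx_act g W = W &
      forall i j, w i != w j -> g i j = 0].

Definition finite_subgroup (n : nat) (G : seq 'M[C]_n) : Prop :=
  [/\ (1%:M : 'M[C]_n) \in G,
      forall a b, a \in G -> b \in G -> a *m b \in G &
      forall a, a \in G -> a \in unitmx /\ invmx a \in G].

Definition fixed_idx (n : nat) (lam : 'rV[C]_n) : {set 'I_n} :=
  [set i | lam 0 i == 1].

(* restriction y_i ↦ 0 for i ∉ I, y_{i_k} ↦ k-th variable of R^g
   (I = {i_1 < … < i_m} enumerated increasingly) *)
Definition restr_subst (n : nat) (I : {set 'I_n}) :
    n.-tuple {mpoly C[#|I|]} :=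
  [tuple \sum_(k < #|I| | enum_val k == i) 'X_k | i < n].

(* W' defined by W'(y_1,…,y_n) = W(x_1,…,x_n), where y_i = Σ_j P_ij x_j *)
Definition change_basis (n : nat) (P : 'M[C]_n) (W : {mpoly C[n]}) :
  {mpoly C[n]} := W \mPo lin_subst (invmx P).

Definition Wfix (n : nat) (P : 'M[C]_n) (lam : 'rV[C]_n) (W : {mpoly C[n]}) :
  {mpoly C[#|fixed_idx lam|]} :=
  change_basis P W \mPo restr_subst (fixed_idx lam).

Definition wfix (n : nat) (lam : 'rV[C]_n) (w : 'I_n -> nat) :
  'I_#|fixed_idx lam| -> nat := fun k => w (enum_val k).

(* matrix of h|_{V^g} in the basis y_{i_1},…,y_{i_m}:
   h·y_{i_a} = Σ_b M_ab y_{i_b}, where (P h P^{-1}) is the matrix of h in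
   the basis y_1,…,y_n *)
Definition restr_mx (n : nat) (P : 'M[C]_n) (lam : 'rV[C]_n) (h : 'M[C]_n) :
  'M[C]_#|fixed_idx lam| :=
  \matrix_(a, b) (P *m h *m invmx P) (enum_val a) (enum_val b).

End Defs.

Arguments Wfix {C n} P lam W.
Arguments wfix {C n} lam w _.
Arguments restr_mx {C n} P lam h.
Arguments restr_subst {C n} I.

From HB Require Import structures.
From mathcomp Require Import all_boot all_order all_algebra.
From mathcomp Require Import reals complex.
From mathcomp Require Import mpoly.
Import GRing.Theory Num.Theory.
Local Open Scope ring_scope.

(* In eigencoordinates y = P x of g, W^g is W composed with the
   linear substitution x = P^-1 S y, where S includes the coordinates fixed by
   g.  Since P is compatible with the weights and S commutes with the weight
   scalings, quasihomogeneity is inherited.  Nondegeneracy survives the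
   invertible change of coordinates P^-1, and then the restriction S: by
   g-invariance dW/dy_j = lam_j (dW/dy_j o g), so for lam_j <> 1 this
   derivative vanishes on the fixed locus, while for lam_j = 1 it restricts to
   a derivative of W^g.  An element h commuting with g preserves V^g, so the
   matrix of h in y-coordinates maps fixed coordinates to fixed coordinates;
   restriction to V^g is therefore multiplicative and carries symmetries of W
   to symmetries of W^g. *)

Set Implicit Arguments.
Unset Strict Implicit.
Unset Printing Implicit Defensive.

Section ChainRule.
Variable R : comNzRingType.

Lemma mderivXU n (l i : 'I_n) : ('X_l : {mpoly R[n]})^`M(i) = (l == i)%:R.
Proof.
rewrite mderivX mnm1E; case: eqP => [->|_]; last by rewrite scale0r.
have -> : (U_(i) - U_(i) = 0)%MM by apply/mnmP => j; rewrite mnmBE subnn mnm0E.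
by rewrite mpolyX0 scale1r.
Qed.

Lemma comp_mpolyA n k l (A : n.-tuple {mpoly R[k]}) (B : k.-tuple {mpoly R[l]}) p :
  p \mPo A \mPo B = p \mPo [tuple tnth A i \mPo B | i < n].
Proof.
rewrite [p \mPo A]comp_mpolyE [RHS]comp_mpolyE raddf_sum /=; apply: eq_bigr => m _.
rewrite comp_mpolyZ rmorph_prod /=; congr (_ *: _); apply: eq_bigr => i _.
by rewrite rmorphXn /= tnth_mktuple.
Qed.

Lemma mderiv_comp_mpoly n k (A : n.-tuple {mpoly R[k]}) p j :
  (p \mPo A)^`M(j) = \sum_(i < n) (p^`M(i) \mPo A) * (tnth A i)^`M(j).
Proof.
pose chain p := forall j,
  (p \mPo A)^`M(j) = \sum_(i < n) (p^`M(i) \mPo A) * (tnth A i)^`M(j).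
have chain0 : chain 0.
  by move=> l; rewrite comp_mpoly0 mderiv0 big1 // => i _; rewrite mderiv0 comp_mpoly0 mul0r.
have chain1 : chain 1.
  move=> l; rewrite comp_mpoly1 -mpolyC1 mderivC big1 // => i _.
  by rewrite mderivC comp_mpoly0 mul0r.
have chainX l : chain 'X_l.
  move=> j'; rewrite comp_mpolyXU -tnth_nth (bigD1 l) //= big1 => [|i /negPf ne_il].
    by rewrite mderivXU eqxx comp_mpoly1 mul1r addr0.
  by rewrite mderivXU eq_sym ne_il comp_mpoly0 mul0r.
have chainD p1 p2 : chain p1 -> chain p2 -> chain (p1 + p2).
  move=> h1 h2 l; rewrite comp_mpolyD mderivD h1 h2 -big_split /=.
  by apply: eq_bigr => i _; rewrite mderivD comp_mpolyD mulrDl.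
have chainZ c p1 : chain p1 -> chain (c *: p1).
  move=> h1 l; rewrite comp_mpolyZ mderivZ h1 scaler_sumr.
  by apply: eq_bigr => i _; rewrite mderivZ comp_mpolyZ scalerAl.
have chainM p1 p2 : chain p1 -> chain p2 -> chain (p1 * p2).
  move=> h1 h2 l; rewrite rmorphM mderivM h1 h2 mulr_suml mulr_sumr -big_split /=.
  apply: eq_bigr => i _; rewrite mderivM rmorphD !rmorphM /= mulrDl.
  by rewrite mulrAC mulrA.
move: j; elim/mpolyind: p => // c m p _ _ IHp; apply: chainD IHp; apply: chainZ.
rewrite mpolyXE_id; elim/big_ind: _ => // i _.
by elim: (m i) => [|e IHe]; rewrite ?expr0 ?exprS //; apply: chainM.
Qed.

Definition mx_subst n k (M : 'M[R]_(n, k)) : n.-tuple {mpoly R[k]} :=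
  [tuple \sum_(j < k) M i j *: 'X_j | i < n].

Lemma comp_mx_subst n k l (M : 'M[R]_(n, k)) (N : 'M[R]_(k, l)) p :
  p \mPo mx_subst M \mPo mx_subst N = p \mPo mx_subst (M *m N).
Proof.
rewrite comp_mpolyA; congr comp_mpoly; apply: eq_from_tnth => i.
rewrite !tnth_mktuple raddf_sum /=.
under eq_bigr => j _ do
  rewrite comp_mpolyZ comp_mpolyXU -tnth_nth tnth_mktuple scaler_sumr.
rewrite exchange_big /=; apply: eq_bigr => j _; rewrite mxE scaler_suml.
by apply: eq_bigr => a _; rewrite scalerA.
Qed.

Lemma comp_mx_subst1 n p : p \mPo mx_subst (1%:M : 'M[R]_n) = p.
Proof.
rewrite -[RHS]comp_mpoly_id; congr comp_mpoly; apply: eq_from_tnth => i.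
rewrite !tnth_mktuple (bigD1 i) //= big1 => [|j ne_ji]; last first.
  by rewrite mxE eq_sym (negPf ne_ji) scale0r.
by rewrite mxE eqxx scale1r addr0.
Qed.

Lemma mderiv_comp_mx_subst n k (M : 'M[R]_(n, k)) p l :
  (p \mPo mx_subst M)^`M(l) = \sum_(i < n) M i l *: (p^`M(i) \mPo mx_subst M).
Proof.
rewrite mderiv_comp_mpoly; apply: eq_bigr => i _.
have -> : (tnth (mx_subst M) i)^`M(l) = (M i l)%:MP.
  rewrite tnth_mktuple (raddf_sum (mderiv l)) (bigD1 l) //= big1 => [|j ne_jl].
    by rewrite mderivZ mderivXU eqxx addr0 -mul_mpolyC mulr1.
  by rewrite mderivZ mderivXU (negPf ne_jl) scaler0.
by rewrite mulrC mul_mpolyC.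
Qed.

End ChainRule.

Section JacobianIdeal.
Variable C : fieldType.
Variable n : nat.
Implicit Types W p q : {mpoly C[n]}.

Lemma jacobian_ideal0 W : in_jacobian_ideal W 0.
Proof. by exists (fun=> 0); rewrite big1 // => i _; rewrite mul0r. Qed.

Lemma jacobian_idealD W p q :
  in_jacobian_ideal W p -> in_jacobian_ideal W q -> in_jacobian_ideal W (p + q).
Proof.
move=> [a ->] [b ->]; exists (fun i => a i + b i); rewrite -big_split /=.
by apply: eq_bigr => i _; rewrite mulrDl.
Qed.

Lemma jacobian_idealMl W p q : in_jacobian_ideal W p -> in_jacobian_ideal W (q * p).
Proof.
move=> [a ->]; exists (fun i => q * a i); rewrite mulr_sumr.
by apply: eq_bigr => i _; rewrite mulrA.
Qed.

Lemma jacobian_idealZ W c p : in_jacobian_ideal W p -> in_jacobian_ideal W (c *: p).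
Proof. by rewrite -mul_mpolyC; apply: jacobian_idealMl. Qed.

Lemma jacobian_ideal_sum W (I : finType) (F : I -> {mpoly C[n]}) :
  (forall i, in_jacobian_ideal W (F i)) -> in_jacobian_ideal W (\sum_i F i).
Proof.
by move=> hF; elim/big_ind: _ => //; [exact: jacobian_ideal0 | exact: jacobian_idealD].
Qed.

Lemma jacobian_ideal_mderiv W i : in_jacobian_ideal W W^`M(i).
Proof.
exists (fun j => (j == i)%:R); rewrite (bigD1 i) //= big1 => [|j /negPf ->].
  by rewrite eqxx mul1r addr0.
by rewrite mul0r.
Qed.

End JacobianIdeal.

Section Nondegeneracy.
Variable C : fieldType.

Lemma nondegenerate_comp n k (W : {mpoly C[n]}) (A : n.-tuple {mpoly C[k]}) :
  nondegenerate_W W -> (forall q, exists p, q = p \mPo A) ->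
  (forall i, in_jacobian_ideal (W \mPo A) (W^`M(i) \mPo A)) ->
  nondegenerate_W (W \mPo A).
Proof.
move=> [B hB] surjA hderA; exists (map (comp_mpoly A) B) => q.
have [p ->] := surjA q; have [c [a hc]] := hB p.
have e := size_map (comp_mpoly A) B.
exists (fun k => c (cast_ord e k)).
rewrite (reindex (cast_ord (esym e))) /=; last first.
  by exists (cast_ord e) => j _; [apply: cast_ordKV | apply: cast_ordK].
under eq_bigr => j _ do rewrite cast_ordKV (nth_map 0) ?(ltn_ord j) // -comp_mpolyZ.
rewrite -raddf_sum -comp_mpolyB hc raddf_sum /=; apply: jacobian_ideal_sum => i.
by rewrite rmorphM /=; apply: jacobian_idealMl.
Qed.

Lemma nondegenerate_comp_unitmx n (W : {mpoly C[n]}) (M : 'M[C]_n) :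
  nondegenerate_W W -> M \in unitmx -> nondegenerate_W (W \mPo mx_subst M).
Proof.
move=> ndW unitM; apply: nondegenerate_comp => [//|q|l].
  by exists (q \mPo mx_subst (invmx M)); rewrite comp_mx_subst mulVmx // comp_mx_subst1.
have inner i (Y : {mpoly C[n]}) :
    \sum_j invmx M j l *: (M i j *: Y) = (i == l)%:R *: Y.
  transitivity ((M *m invmx M) i l *: Y); last by rewrite mulmxV // mxE.
  by rewrite mxE scaler_suml; apply: eq_bigr => j _; rewrite scalerA mulrC.
have -> : W^`M(l) \mPo mx_subst M = \sum_j invmx M j l *: (W \mPo mx_subst M)^`M(j).
  under [RHS]eq_bigr => j _ do rewrite mderiv_comp_mx_subst scaler_sumr.
  rewrite exchange_big /=; under eq_bigr => i _ do rewrite inner.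
  rewrite (bigD1 l) //= big1 => [|i /negPf ->]; last by rewrite scale0r.
  by rewrite eqxx scale1r addr0.
by apply: jacobian_ideal_sum => j; apply/jacobian_idealZ/jacobian_ideal_mderiv.
Qed.

End Nondegeneracy.

Section CoordinateInclusion.
Variables (C : fieldType) (n : nat) (I : {set 'I_n}).

Definition incl_mx : 'M[C]_(n, #|I|) := colsub (fun k : 'I_#|I| => enum_val k) 1%:M.

Lemma incl_mxE i k : incl_mx i k = (i == enum_val k)%:R.
Proof. by rewrite !mxE. Qed.

Lemma restr_subst_incl : restr_subst I = mx_subst incl_mx.
Proof.
apply: eq_from_tnth => i; rewrite !tnth_mktuple big_mkcond /=.
apply: eq_bigr => k _; rewrite incl_mxE eq_sym.
by case: eqP => _; rewrite ?scale1r ?scale0r.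
Qed.

Lemma incl_mx_conj (M : 'M[C]_n) :
  incl_mx^T *m M *m incl_mx = mxsub enum_val enum_val M.
Proof.
rewrite mulmx_colsub mulmx1 trmx_mxsub trmx1 mul_rowsub_mx mul1mx.
by apply/matrixP => a b; rewrite !mxE.
Qed.

Lemma mul_trmx_incl_mx : incl_mx^T *m incl_mx = 1%:M.
Proof.
rewrite -[X in X *m _]mulmx1 incl_mx_conj.
by apply/matrixP => a b; rewrite !mxE (inj_eq enum_val_inj).
Qed.

Lemma incl_mx_stable (M : 'M[C]_n) :
  (forall i j, i \in I -> j \notin I -> M j i = 0) ->
  M *m incl_mx = incl_mx *m (incl_mx^T *m M *m incl_mx).
Proof.
move=> stableM; apply/matrixP => j b; rewrite incl_mx_conj mulmx_colsub mulmx1 !mxE.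
under eq_bigr => a _ do rewrite !mxE.
rewrite -(big_enum_val (fun i => (j == i)%:R * M i (enum_val b))) /=.
case: (boolP (j \in I)) => [jI | jNI].
  rewrite (bigD1 j) //= eqxx mul1r big1 ?addr0 // => i /andP[_ ne_ij].
  by rewrite eq_sym (negPf ne_ij) mul0r.
rewrite stableM ?enum_valP // big1 // => i iI.
by case: eqP => [eq_ji|]; [move: jNI; rewrite eq_ji iI | rewrite mul0r].
Qed.

Lemma mderiv_comp_incl_mx (p : {mpoly C[n]}) a :
  (p \mPo mx_subst incl_mx)^`M(a) = p^`M(enum_val a) \mPo mx_subst incl_mx.
Proof.
rewrite mderiv_comp_mx_subst (bigD1 (enum_val a)) //= big1 => [|i ne_ia].
  by rewrite incl_mxE eqxx scale1r addr0.
by rewrite incl_mxE (negPf ne_ia) scale0r.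
Qed.

End CoordinateInclusion.

Section Weights.
Variable C : fieldType.

Definition weight_mx n (w : 'I_n -> nat) (t : C) : 'M[C]_n := diag_mx (\row_i t ^+ w i).

Definition respects_weights n (w : 'I_n -> nat) (M : 'M[C]_n) :=
  forall i j, w i != w j -> M i j = 0.

Lemma qh_subst_weight_mx n (w : 'I_n -> nat) t : qh_subst w t = mx_subst (weight_mx w t).
Proof.
apply: eq_from_tnth => i; rewrite !tnth_mktuple (bigD1 i) //= big1 => [|j ne_ji].
  by rewrite !mxE eqxx mulr1n addr0.
by rewrite mxE eq_sym (negPf ne_ji) mulr0n scale0r.
Qed.

Lemma respects_weights_comm n (w : 'I_n -> nat) M t :
  respects_weights w M -> comm_mx M (weight_mx w t).
Proof.
move=> wM; apply/matrixP => i j; rewrite mul_diag_mx mul_mx_diag !mxE.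
by have [->|/wM ->] := eqVneq (w i) (w j); [rewrite mulrC | rewrite mulr0 mul0r].
Qed.

Lemma respects_weightsM n (w : 'I_n -> nat) (A B : 'M[C]_n) :
  respects_weights w A -> respects_weights w B -> respects_weights w (A *m B).
Proof.
move=> wA wB i j ne_ij; rewrite mxE big1 // => k _.
have [eq_ik|/wA ->] := eqVneq (w i) (w k); last by rewrite mul0r.
by rewrite wB ?mulr0 // -eq_ik.
Qed.

Lemma incl_mx_weight n (I : {set 'I_n}) (w : 'I_n -> nat) t :
  incl_mx C I *m weight_mx (fun k => w (enum_val k)) t = weight_mx w t *m incl_mx C I.
Proof.
apply/matrixP => i k; rewrite mul_diag_mx mul_mx_diag !mxE.
by case: eqP => [->|_]; rewrite (mulr1, mulr0) (mul1r, mul0r).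
Qed.

Lemma quasihomogeneous_comp n k (W : {mpoly C[n]}) w d (w' : 'I_k -> nat) M :
  quasihomogeneous_wd W w d -> (forall j, 0 < w' j)%N ->
  (forall t, M *m weight_mx w' t = weight_mx w t *m M) ->
  quasihomogeneous_wd (W \mPo mx_subst M) w' d.
Proof.
move=> [_ d_gt0 qhW] w'_gt0 wM; split=> // t.
by rewrite qh_subst_weight_mx comp_mx_subst wM -comp_mx_subst -qh_subst_weight_mx qhW comp_mpolyZ.
Qed.

Lemma mx_act_comp n k (W : {mpoly C[n]}) (M : 'M[C]_(n, k)) h h' :
  mx_act h W = W -> M *m h' = h *m M ->
  mx_act h' (W \mPo mx_subst M) = W \mPo mx_subst M.
Proof.
by rewrite /mx_act => hW hM; rewrite comp_mx_subst hM -comp_mx_subst hW.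
Qed.

End Weights.

Lemma comm_mx_invmx (R : comUnitRingType) n (A B : 'M[R]_n) :
  A \in unitmx -> comm_mx A B -> comm_mx (invmx A) B.
Proof.
move=> unitA AB; rewrite /comm_mx -[LHS]mulmx1 -(mulmxV unitA) !mulmxA.
by rewrite -(mulmxA _ B A) -AB mulmxA mulVmx // mul1mx.
Qed.

(* In characteristic 0 the scaling t = 2 already separates the weights. *)
Lemma comm_weight_mx_respects (F : numFieldType) n (w : 'I_n -> nat) (M : 'M[F]_n) :
  comm_mx M (weight_mx w 2) -> respects_weights w M.
Proof.
move=> /matrixP wM i j ne_w; have := wM i j; rewrite mul_diag_mx mul_mx_diag !mxE.
move/eqP; rewrite mulrC -subr_eq0 -mulrBl mulf_eq0 subr_eq0 => /orP[|/eqP //].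
by rewrite -!natrX eqr_nat eqn_exp2l // eq_sym (negPf ne_w).
Qed.

Lemma invmx_respects_weights (F : numFieldType) n (w : 'I_n -> nat) (M : 'M[F]_n) :
  M \in unitmx -> respects_weights w M -> respects_weights w (invmx M).
Proof.
move=> unitM wM; apply: comm_weight_mx_respects.
exact/comm_mx_invmx/respects_weights_comm.
Qed.

Section FixedLocus.
Variables (C : fieldType) (n : nat) (lam : 'rV[C]_n).
Local Notation S := (incl_mx C (fixed_idx lam)).

Lemma diag_mx_incl_fixed : diag_mx lam *m S = S.
Proof.
apply/matrixP => i k; rewrite mul_diag_mx !mxE.
case: eqP => [->|_]; last by rewrite mulr0.
by have := enum_valP k; rewrite inE => /eqP ->; rewrite mul1r.
Qed.

Lemma comm_diag_fixed_stable (M : 'M[C]_n) i j :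
  comm_mx M (diag_mx lam) -> i \in fixed_idx lam -> j \notin fixed_idx lam ->
  M j i = 0.
Proof.
rewrite !inE => /matrixP/(_ j i) + /eqP lam_i lam_j.
rewrite mul_diag_mx mul_mx_diag !mxE lam_i mulr1 => /eqP.
by rewrite -subr_eq0 -{1}(mul1r (M j i)) -mulrBl mulf_eq0 subr_eq0 eq_sym (negPf lam_j) => /eqP.
Qed.

Lemma nondegenerate_comp_incl_fixed (W : {mpoly C[n]}) :
  nondegenerate_W W -> W \mPo mx_subst (diag_mx lam) = W ->
  nondegenerate_W (W \mPo mx_subst S).
Proof.
move=> ndW invW; apply: nondegenerate_comp => [//|q|j].
  by exists (q \mPo mx_subst S^T); rewrite comp_mx_subst mul_trmx_incl_mx comp_mx_subst1.
have [jI|jNI] := boolP (j \in fixed_idx lam).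
  by rewrite -(enum_rankK_in jI jI) -mderiv_comp_incl_mx; apply: jacobian_ideal_mderiv.
have dWj : W^`M(j) = lam 0 j *: (W^`M(j) \mPo mx_subst (diag_mx lam)).
  rewrite -{1}invW mderiv_comp_mx_subst (bigD1 j) //= big1 => [|i ne_ij].
    by rewrite mxE eqxx mulr1n addr0.
  by rewrite mxE (negPf ne_ij) mulr0n scale0r.
have : W^`M(j) \mPo mx_subst S = lam 0 j *: (W^`M(j) \mPo mx_subst S).
  by rewrite {1}dWj comp_mpolyZ comp_mx_subst diag_mx_incl_fixed.
rewrite inE in jNI; move/eqP; rewrite -subr_eq0 -{1}(scale1r (_ \mPo _)) -scalerBl.
rewrite scaler_eq0 subr_eq0 eq_sym (negPf jNI) => /eqP ->.
exact: jacobian_ideal0.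
Qed.

End FixedLocus.

Section Restriction.
Variables (F : numFieldType) (n : nat) (W : {mpoly F[n]}) (w : 'I_n -> nat).
Variables (g P : 'M[F]_n) (lam : 'rV[F]_n).
Hypotheses (P_unit : P \in unitmx) (P_eigen : P *m g = diag_mx lam *m P).
Hypothesis P_weights : respects_weights w P.
Local Notation S := (incl_mx F (fixed_idx lam)).

Lemma WfixE : Wfix P lam W = W \mPo mx_subst (invmx P *m S).
Proof. by rewrite /Wfix /change_basis restr_subst_incl comp_mx_subst. Qed.

Lemma invmx_eigen : invmx P *m diag_mx lam = g *m invmx P.
Proof.
rewrite -[LHS]mulmx1 -(mulmxV P_unit) !mulmxA -(mulmxA _ _ P) -P_eigen.
by rewrite mulmxA mulVmx // mul1mx.
Qed.

Lemma restr_mxE h : restr_mx P lam h = S^T *m (P *m h *m invmx P) *m S.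
Proof. by rewrite incl_mx_conj; apply/matrixP => a b; rewrite !mxE. Qed.

Lemma conj_comm_diag h : comm_mx h g -> comm_mx (P *m h *m invmx P) (diag_mx lam).
Proof.
move=> hg; rewrite /comm_mx -!mulmxA invmx_eigen !mulmxA -(mulmxA P h g) hg.
by rewrite mulmxA P_eigen.
Qed.

Lemma restr_mxM h1 h2 : comm_mx h2 g ->
  restr_mx P lam (h1 *m h2) = restr_mx P lam h1 *m restr_mx P lam h2.
Proof.
move=> h2g; rewrite !restr_mxE -[in RHS](mulmxA _ S) -incl_mx_stable; last first.
  by move=> i j; apply: comm_diag_fixed_stable; apply: conj_comm_diag.
by rewrite !mulmxA -(mulmxA _ (invmx P) P) mulVmx // mulmx1.
Qed.

Lemma Wfix_quasihomogeneous d :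
  quasihomogeneous_wd W w d -> quasihomogeneous_wd (Wfix P lam W) (wfix lam w) d.
Proof.
move=> qhW; have [w_gt0 _ _] := qhW; rewrite WfixE.
apply: quasihomogeneous_comp qhW _ _ => [k|t]; first exact: w_gt0.
have Pi_w : comm_mx (invmx P) (weight_mx w t).
  exact/respects_weights_comm/invmx_respects_weights.
by rewrite -mulmxA incl_mx_weight !mulmxA Pi_w.
Qed.

Lemma Wfix_nondegenerate :
  in_sym_group W w g -> nondegenerate_W W -> nondegenerate_W (Wfix P lam W).
Proof.
move=> [_ gW _] ndW; rewrite WfixE -comp_mx_subst.
apply: nondegenerate_comp_incl_fixed.
  by apply: nondegenerate_comp_unitmx ndW _; rewrite unitmx_inv.
exact: mx_act_comp gW invmx_eigen.
Qed.

Lemma restr_mx_sym_group h : in_sym_group W w h -> comm_mx h g ->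
  in_sym_group (Wfix P lam W) (wfix lam w) (restr_mx P lam h).
Proof.
move=> [h_unit hW h_weights] hg; split.
- suff /mulmx1_unit[] : restr_mx P lam (invmx h) *m restr_mx P lam h = 1%:M by [].
  rewrite -restr_mxM // mulVmx // restr_mxE mulmx1 mulmxV //.
  by rewrite mulmx1 mul_trmx_incl_mx.
- rewrite WfixE; apply: mx_act_comp hW _.
  rewrite restr_mxE -(mulmxA _ S) -incl_mx_stable; last first.
    by move=> i j; apply: comm_diag_fixed_stable; apply: conj_comm_diag.
  by rewrite !mulmxA mulVmx // mul1mx.
- move=> a b ne_ab; rewrite restr_mxE incl_mx_conj mxE.
  suff conj_w : respects_weights w (P *m h *m invmx P) by exact: conj_w.
  apply: respects_weightsM; first exact: respects_weightsM.
  exact: invmx_respects_weights.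
Qed.

End Restriction.

Theorem lemma4p1 (R : realType) (n : nat) (W : {mpoly R[i][n]})
    (w : 'I_n -> nat) (d : nat)
    (hqh : quasihomogeneous_wd W w d) (hnd : nondegenerate_W W)
    (G : seq 'M[R[i]]_n) (hG : finite_subgroup G)
    (hGW : forall g, g \in G -> in_sym_group W w g)
    (g : 'M[R[i]]_n) (hg : g \in G)
    (P : 'M[R[i]]_n) (lam : 'rV[R[i]]_n)
    (hPunit : P \in unitmx)
    (hPeig : P *m g = diag_mx lam *m P)
    (hPw : forall i j, w i != w j -> P i j = 0)
    (hng : (0 < \rank (kermx (1%:M - g)))%N) :
  [/\ quasihomogeneous_wd (Wfix P lam W) (wfix lam w) d,
      nondegenerate_W (Wfix P lam W),
      (forall h, h \in G -> h *m g = g *m h ->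
         in_sym_group (Wfix P lam W) (wfix lam w) (restr_mx P lam h)) &
      (forall h1 h2, h1 \in G -> h1 *m g = g *m h1 ->
         h2 \in G -> h2 *m g = g *m h2 ->
         restr_mx P lam (h1 *m h2) = restr_mx P lam h1 *m restr_mx P lam h2)].
Proof.
split.
- exact: Wfix_quasihomogeneous lam hPunit hPw _ hqh.
- exact: Wfix_nondegenerate hPunit hPeig (hGW g hg) hnd.
- move=> h hh hhg; exact: (restr_mx_sym_group hPunit hPeig hPw (hGW h hh) hhg).
- move=> h1 h2 _ _ _ h2g; exact: (restr_mxM hPunit hPeig h1 h2g).
Qed.
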